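(* For any good configuration $F$, $\Pr(\mathcal P_S \text{ belongs to } F)=e^{-(\theta_F+o(1))k}$ as $k\to\infty$, where $\theta_F$ is a constant depending on $F$ (and not on $k$).
   Context: Fix $0<\varepsilon<\frac12$, a constant $M\ge 40$, and an integer $N$ divisible by $21$, sufficiently large in terms of $\varepsilon$ and $M$; let $k\to\infty$. Let $S=[-\frac12M\sqrt k,\frac12M\sqrt k]^2$, tiled by $(MN)^2$ small squares of side $\ell=\sqrt k/N$ (indexed in a fixed $k$-independent way), and let $\mathcal P_S$ be a Poisson process of intensity one in $S$. For a small square $S_i$ containing $r$ points, set $d(S_i)=0$ if $r=0$, $d(S_i)=\lceil N^3r/k\rceil/N$ if $1\le r\le k$, and $d(S_i)=\infty$ if $r>k$. A configuration $F$ is an assignment of a label in $\{0,\infty\}\cup\{j/N:1\le j\le N^3\}$ to each small square; a point set belongs to $F$ if its values $d(S_i)$ equal these labels. Let $\Sigma$ be the set of circles whose centres are centres of small squares and which pass through the centre of at least one other small square; for $\Gamma\in\Sigma$ let $R_\Gamma$ be the set of small squares lying entirely within distance $\frac52\ell\sqrt2$ of $\Gamma$. $F$ is of Type A if some label exceeds $N^2/21$; of Type B if for some $\Gamma\in\Sigma$, $\frac{k}{N^2}\sum_{S_i\in R_\Gamma}d(S_i)\ge\frac{\varepsilon k}{2}$. $F$ is good if it is of neither type. *)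

From mathcomp Require Import all_boot all_order all_algebra.
From mathcomp Require Import all_classical all_reals all_analysis.
Set Implicit Arguments. Unset Strict Implicit. Unset Printing Implicit Defensive.
Import Order.TTheory GRing.Theory Num.Theory.
Local Open Scope ring_scope.

(* Small squares: the square (a,b) (a,b < n, where n = M*N squares per side).
   Labels: [None] = infinity, [Some j] = j/N (so [Some 0] is the label 0;
   valid labels are j <= N^3). *)
Definition square (n : nat) := ('I_n * 'I_n)%type.
Definition config (n : nat) := {ffun square n -> option nat}.

Definition valid_config (N n : nat) (F : config n) : Prop :=
  forall i j, F i = Some j -> (j <= N ^ 3)%N.

(* d(S_i) as a function of the number r of points in S_i:
   0 if r = 0, ceil(N^3 r / k)/N if 1 <= r <= k, infinity if r > k.
   For 1 <= r <= k (so k >= 1), ceil(N^3 r/k) = (N^3 r + k - 1) %/ k. *)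
Definition dlabel (N k r : nat) : option nat :=
  if r == 0%N then Some 0%N
  else if (r <= k)%N then Some ((N ^ 3 * r + k - 1) %/ k)%N
  else None.

Section Geometry.
Context {R : realType}.

(* Geometry in units of the small-square side ell = sqrt k / N (all the
   geometric conditions below are invariant under translation and scaling,
   since the threshold 5/2 * ell * sqrt 2 also scales with ell). *)
Definition cx n (i : square n) : R := (i.1 : nat)%:R + 2^-1.
Definition cy n (i : square n) : R := (i.2 : nat)%:R + 2^-1.

Definition dist2 (x1 y1 x2 y2 : R) : R := Num.sqrt ((x1 - x2) ^+ 2 + (y1 - y2) ^+ 2).

(* A circle Gamma in Sigma is given by a pair (c, c') of distinct small squares:
   centre = centre of c, radius = distance from centre of c to centre of c'. *)
Definition in_R_Gamma n (c c' : square n) (i : square n) : Prop :=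
  let r := dist2 (cx c) (cy c) (cx c') (cy c') in
  forall x y : R,
    (i.1 : nat)%:R <= x <= (i.1 : nat)%:R + 1 ->
    (i.2 : nat)%:R <= y <= (i.2 : nat)%:R + 1 ->
    `| dist2 x y (cx c) (cy c) - r | <= 5 / 2 * Num.sqrt 2.

Definition labval (N : nat) (l : option nat) : \bar R :=
  match l with None => +oo%E | Some j => (j%:R / N%:R)%:E end.

Definition typeA (N n : nat) (F : config n) : Prop :=
  exists i, ((N%:R ^+ 2 / 21)%:E < labval N (F i))%E.

(* (k/N^2) * sum d >= eps k / 2  <=>  sum d >= eps N^2 / 2  (k > 0). *)
Definition typeB (eps : R) (N n : nat) (F : config n) : Prop :=
  exists c c' : square n, c != c' /\
    ((eps * N%:R ^+ 2 / 2)%:E <=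
       \sum_(i | `[< in_R_Gamma c c' i >]) labval N (F i))%E.

Definition good (eps : R) (N n : nat) (F : config n) : Prop :=
  ~ typeA N F /\ ~ typeB eps N F.

Definition poisson_mass (lam : R) (r : nat) : R :=
  expR (- lam) * lam ^+ r / (r`!)%:R.

(* Pr(P_S belongs to F): the counts in the (MN)^2 disjoint small squares
   of area ell^2 = k/N^2 are independent Poisson(k/N^2). *)
Definition prob_config (N k n : nat) (F : config n) : R :=
  \prod_(i : square n)
    limn (fun m : nat => \sum_(0 <= r < m)
       (if dlabel N k r == F i then poisson_mass (k%:R / N%:R ^+ 2) r else 0)).

End Geometry.

(* For a fixed configuration the cell counts are independent Poisson(k/N^2)
   variables, so the probability is a product of cell probabilities
   g_j(k) = Pr(a Poisson(k/N^2) count has label j).  Each g_j is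
   supermultiplicative: counts with label j for k1 and for k2 add up to a count
   with label j for k1 + k2, since (j-1) k < N^3 r <= j k is stable under
   addition, and independent Poisson laws add by convolution.  For k >= N^3
   every finite label is attained, so the product lies in (0,1], and Fekete's
   lemma yields the rate theta_F = - sup_k ln Pr(F at k) / k.  Only the absence
   of infinite labels (no label exceeds N^2/21) is used. *)

From mathcomp Require Import all_boot all_order all_algebra.
From mathcomp Require Import all_classical all_reals all_analysis.
From mathcomp Require Import ring lra zify.
Set Implicit Arguments. Unset Strict Implicit. Unset Printing Implicit Defensive.
Import Order.TTheory GRing.Theory Num.Theory.
Local Open Scope ring_scope.

Section Fekete.
Variable R : realType.

Lemma prodr_le_factor (I : finType) (Q : pred I) (F : I -> R) i :
  (forall i, Q i -> 0 <= F i <= 1) -> Q i -> \prod_(i | Q i) F i <= F i.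
Proof.
move=> F01 Qi; rewrite (bigD1 i) //= ler_piMr //; first by case/andP: (F01 i Qi).
by apply: prodr_ile1 => t /andP[Qt _]; apply: F01.
Qed.

Lemma expR_le_eventually (C eta : R) : 0 < C -> 0 < eta ->
  exists K, forall k, (K <= k)%N -> expR (- eta * k%:R) <= C.
Proof.
move=> C_gt0 eta_gt0; exists (Num.truncn (- ln C / eta)).+1 => k Kk.
rewrite -[C]lnK ?posrE // ler_expR mulNr lerNl -ler_pdivrMl // mulrC.
by apply/ltW/(lt_le_trans (truncnS_gt _)); rewrite ler_nat.
Qed.

Variables (P : nat -> R) (k0 : nat).
Hypothesis P_ge0 : forall k, 0 <= P k.
Hypothesis P_le1 : forall k, P k <= 1.
Hypothesis P_supermul : forall k1 k2, P k1 * P k2 <= P (k1 + k2).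
Hypothesis P_gt0 : forall k, (k0 <= k)%N -> 0 < P k.
Hypothesis k0_gt0 : (0 < k0)%N.

Lemma supermul_iter m s q : P m ^+ q * P s <= P (q * m + s).
Proof.
elim: q => [|q IH]; first by rewrite expr0 mul1r.
rewrite exprS -mulrA mulSn -addnA (le_trans _ (P_supermul _ _)) //.
by rewrite ler_wpM2l.
Qed.

Lemma supermul_window m k : (0 < m)%N -> (k0 <= k)%N ->
  P m ^+ ((k - k0) %/ m) * \prod_(t < k0 + m | (k0 <= t)%N) P t <= P k.
Proof.
move=> m_gt0 k0k; pose s := (k0 + (k - k0) %% m)%N.
have s_lt : (s < k0 + m)%N by rewrite ltn_add2l ltn_mod.
have k_eq : k = ((k - k0) %/ m * m + s)%N by rewrite /s addnCA -divn_eq subnKC.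
rewrite [in leRHS]k_eq; apply: le_trans (supermul_iter _ _ _).
rewrite ler_wpM2l ?exprn_ge0 //.
by apply: (prodr_le_factor (i := Ordinal s_lt)) => //= [t _|]; rewrite ?P_ge0 ?P_le1 ?leq_addr.
Qed.

Definition log_rates := [set x : R | exists2 k, (k0 <= k)%N & x = ln (P k) / k%:R]%classic.

Definition growth_rate := sup log_rates.

Lemma log_rates_neq0 : (log_rates !=set0)%classic.
Proof. by exists (ln (P k0) / k0%:R), k0. Qed.

Lemma ubound_log_rates : ubound log_rates 0.
Proof. by move=> _ [k _ ->]; rewrite mulr_le0_ge0 ?invr_ge0 ?ler0n ?ln_le0. Qed.

Lemma has_sup_log_rates : has_sup log_rates.
Proof. by split; [exact: log_rates_neq0 | exists 0; exact: ubound_log_rates]. Qed.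

Lemma growth_rate_le0 : growth_rate <= 0.
Proof. exact: ge_sup log_rates_neq0 ubound_log_rates. Qed.

Lemma le_expR_growth_rate k : (k0 <= k)%N -> P k <= expR (growth_rate * k%:R).
Proof.
move=> k0k; have k_gt0 : 0 < k%:R :> R by rewrite ltr0n (leq_trans k0_gt0).
have rate_ge : ln (P k) / k%:R <= growth_rate.
  by apply: sup_upper_bound; [exact: has_sup_log_rates | exists k].
by rewrite -[P k]lnK ?posrE ?P_gt0 // ler_expR -ler_pdivrMr.
Qed.

Lemma expR_growth_rate_le eta : 0 < eta ->
  exists K, forall k, (K <= k)%N -> expR ((growth_rate - eta) * k%:R) <= P k.
Proof.
move=> eta_gt0; have eta2_gt0 : 0 < eta / 2 by rewrite divr_gt0.
have [_ [m k0m ->] rate_lt] := sup_adherent eta2_gt0 has_sup_log_rates.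
have m_gt0 : (0 < m)%N by apply: leq_trans k0m.
pose C := \prod_(t < k0 + m | (k0 <= t)%N) P t.
have C_gt0 : 0 < C by apply: prodr_gt0 => t /P_gt0.
have [K CK] := expR_le_eventually C_gt0 eta2_gt0.
exists (maxn K k0) => k; rewrite geq_max => /andP[Kk k0k].
apply: le_trans (supermul_window m_gt0 k0k); set q := ((k - k0) %/ m)%N.
have Pm : expR ((growth_rate - eta / 2) * m%:R) <= P m.
  by rewrite -[P m]lnK ?posrE ?P_gt0 // ler_expR -ler_pdivlMr ?ltr0n // ltW.
have qm : (q * m <= k)%N by rewrite (leq_trans (leq_divM _ _)) ?leq_subr.
have -> : (growth_rate - eta) * k%:R =
          (growth_rate - eta / 2) * k%:R + - (eta / 2) * k%:R by lra.
rewrite expRD ler_pM ?expR_ge0 ?CK //.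
apply: (@le_trans _ _ (expR ((growth_rate - eta / 2) * m%:R) ^+ q)).
  rewrite -expRM_natr ler_expR -mulrA -natrM mulnC ler_wnM2l ?ler_nat //.
  by have := growth_rate_le0; lra.
by rewrite lerXn2r // nnegrE ?expR_ge0 ?P_ge0.
Qed.

Lemma supermul_exp_asymptotics : exists theta : R, forall eta : R, 0 < eta ->
  exists K, forall k, (K <= k)%N ->
    expR (- (theta + eta) * k%:R) <= P k <= expR (- (theta - eta) * k%:R).
Proof.
exists (- growth_rate) => eta eta_gt0.
have [K lowK] := expR_growth_rate_le eta_gt0.
exists (maxn K k0) => k; rewrite geq_max => /andP[Kk k0k].
have -> : - (- growth_rate + eta) = growth_rate - eta by ring.
have -> : - (- growth_rate - eta) = growth_rate + eta by ring.
rewrite lowK //=; apply: le_trans (le_expR_growth_rate k0k) _.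
by rewrite ler_expR ler_wpM2r // lerDl ltW.
Qed.

End Fekete.

Section Convolution.
Variable R : realType.

Lemma sumr_nat_subrange_le (F : nat -> R) (a b m n : nat) :
  (forall i, 0 <= F i) -> (m <= a)%N -> (a <= b)%N -> (b <= n)%N ->
  \sum_(a <= i < b) F i <= \sum_(m <= i < n) F i.
Proof.
move=> F_ge0 ma ab bn.
rewrite [leRHS](big_cat_nat ma (leq_trans ab bn)) (big_cat_nat ab bn) /=.
by rewrite addrCA lerDl addr_ge0 ?sumr_ge0.
Qed.

(* The pair [(i, j)] reappears on the right as [(r, i) = (i + j, i)]. *)
Lemma sum_mul_le_conv (f : nat -> nat -> R) (n : nat) :
  (forall i j, 0 <= f i j) ->
  \sum_(0 <= i < n) \sum_(0 <= j < n) f i j <=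
  \sum_(0 <= r < n + n) \sum_(0 <= i < r.+1) f i (r - i)%N.
Proof.
move=> f_ge0; pose g r i := if (i <= r)%N then f i (r - i)%N else 0.
have g_ge0 r i : 0 <= g r i by rewrite /g; case: ifP.
have -> : \sum_(0 <= r < n + n) \sum_(0 <= i < r.+1) f i (r - i)%N =
          \sum_(0 <= i < n + n) \sum_(0 <= r < n + n) g r i.
  rewrite exchange_big_nat; apply: eq_big_nat => r /andP[_ rn].
  by rewrite (big_nat_widen _ _ _ _ _ rn) big_mkcond.
rewrite [leRHS](big_cat_nat (leq0n n) (leq_addr n n)) /=.
apply: ler_wpDr; first by do 2!apply: sumr_ge0 => ? _.
apply: ler_sum_nat => i /andP[_ i_lt].
have -> : \sum_(0 <= j < n) f i j = \sum_(0 + i <= r < n + i) g r i.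
  by rewrite big_addn addnK; apply: eq_bigr => j _; rewrite /g leq_addl addnK.
by apply: sumr_nat_subrange_le => //; lia.
Qed.

End Convolution.

Section Poisson.
Variable R : realType.
Implicit Types lam : R.

Lemma poisson_mass_ge0 lam r : 0 <= lam -> 0 <= poisson_mass lam r.
Proof. by move=> ?; rewrite /poisson_mass divr_ge0 ?mulr_ge0 ?expR_ge0 ?exprn_ge0. Qed.

Lemma poisson_mass_gt0 lam r : 0 < lam -> 0 < poisson_mass lam r.
Proof.
by move=> ?; rewrite /poisson_mass divr_gt0 ?mulr_gt0 ?expR_gt0 ?exprn_gt0 ?ltr0n ?fact_gt0.
Qed.

Lemma sum_poisson_mass_le1 lam n : 0 <= lam -> \sum_(0 <= r < n) poisson_mass lam r <= 1.
Proof.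
move=> lam_ge0; rewrite (eq_bigr (fun r => expR (- lam) * exp_coeff lam r)); last first.
  by move=> r _; rewrite /poisson_mass /exp_coeff /= mulrA.
rewrite -mulr_sumr expRN ler_pdivrMl ?expR_gt0 // mulr1.
apply: (nondecreasing_cvgn_le _ (is_cvg_series_exp_coeff lam)).
by apply: nondecreasing_series => m _ _; apply: exp_coeff_ge0.
Qed.

Lemma poisson_massD lam mu r :
  poisson_mass (lam + mu) r =
  \sum_(0 <= i < r.+1) poisson_mass lam i * poisson_mass mu (r - i).
Proof.
rewrite /poisson_mass addrC exprDn big_mkord mulr_sumr mulr_suml.
apply: eq_bigr => i _; have ir : (i <= r)%N by rewrite -ltnS.
rewrite -(bin_fact ir) !natrM mulr_natr -[_ *+ _]mulr_natr opprD expRD.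
have nz n : (n`!%:R : R) != 0 by rewrite pnatr_eq0 -lt0n fact_gt0.
have bin_nz : ('C(r, i)%:R : R) != 0 by rewrite pnatr_eq0 -lt0n bin_gt0.
by field; rewrite !nz bin_nz.
Qed.

End Poisson.

Section Labels.
Variables N j : nat.
Hypothesis N_gt0 : (0 < N)%N.
Hypothesis j_le : (j <= N ^ 3)%N.

Lemma dlabel_gt k r : (k < r)%N -> dlabel N k r = None.
Proof. by move=> kr; rewrite /dlabel gtn_eqF ?(leq_ltn_trans _ kr)// leqNgt kr. Qed.

Lemma dlabel_le k r : dlabel N k r == Some j -> (r <= k)%N.
Proof. by case: (leqP r k) => // /dlabel_gt ->. Qed.

(* For [j > 0] this is [j = ceil (N^3 r / k)], in the form that is stable under addition. *)
Lemma dlabelE k r :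
  (dlabel N k r == Some j) =
  (if j == 0%N then r == 0%N else (j.-1 * k < N ^ 3 * r <= j * k))%N.
Proof.
have N3 : (0 < N ^ 3)%N by rewrite expn_gt0 N_gt0.
rewrite /dlabel; have [->|r0] := eqVneq r 0%N.
  by case: j => [|i]//=; rewrite muln0 ltn0.
have [rk|kr] := leqP r k; last first.
  by case: (j =P 0%N) => // _; apply/esym/negbTE/andP; move: N3 j_le; nia.
have k0 : (0 < k)%N by apply: leq_trans rk; rewrite lt0n.
rewrite /eq_op /= eqn_leq leq_divRL // -ltnS ltn_divLR //.
case: j j_le => [|i] i_le /=.
  by rewrite mul0n mul1n leq0n andbT; apply/negbTE; rewrite -leqNgt; nia.
by apply/andP/andP => -[? ?]; split; nia.
Qed.

Lemma dlabelD k1 k2 r1 r2 :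
  dlabel N k1 r1 == Some j -> dlabel N k2 r2 == Some j ->
  dlabel N (k1 + k2) (r1 + r2) == Some j.
Proof.
rewrite !dlabelE; case: (j =P 0%N) => [_ /eqP-> /eqP->|_]//.
by move=> /andP[? ?] /andP[? ?]; apply/andP; split; nia.
Qed.

Lemma dlabel_exists k : (N ^ 3 <= k)%N -> exists2 r, (r <= k)%N & dlabel N k r == Some j.
Proof.
move=> Nk; have N3 : (0 < N ^ 3)%N by rewrite expn_gt0 N_gt0.
have [j0|j0] := eqVneq j 0%N; first by exists 0%N; rewrite ?dlabelE ?j0.
exists (j * k %/ N ^ 3)%N.
  by have := leq_divM (j * k) (N ^ 3); move: N3 j_le; nia.
rewrite dlabelE (negbTE j0).
have := leq_divM (j * k) (N ^ 3); have := ltn_ceil (j * k) N3.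
by move: N3 Nk j_le; set r := (j * k %/ N ^ 3)%N; case: j j0 => //=; nia.
Qed.

End Labels.

Section Cell.
Variable R : realType.
Variables N j : nat.
Hypothesis N_gt0 : (0 < N)%N.
Hypothesis j_le : (j <= N ^ 3)%N.

Definition cell_mean (k : nat) : R := k%:R / N%:R ^+ 2.

Definition cell_prob (k : nat) : R :=
  \sum_(0 <= r < k.+1 | dlabel N k r == Some j) poisson_mass (cell_mean k) r.

Lemma cell_mean_ge0 k : 0 <= cell_mean k.
Proof. by rewrite /cell_mean divr_ge0 ?exprn_ge0. Qed.

Lemma cell_meanD k1 k2 : cell_mean (k1 + k2) = cell_mean k1 + cell_mean k2.
Proof. by rewrite /cell_mean natrD mulrDl. Qed.

Lemma cell_probE k n : (k < n)%N ->
  cell_prob k = \sum_(0 <= r < n)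
    (if dlabel N k r == Some j then poisson_mass (cell_mean k) r else 0).
Proof.
move=> kn; rewrite -big_mkcond /cell_prob (big_nat_widen _ _ _ _ _ kn).
apply: eq_bigl => r; rewrite ltnS.
by case: (boolP (_ == _)) => // /dlabel_le ->.
Qed.

Lemma cell_prob_ge0 k : 0 <= cell_prob k.
Proof. by apply: sumr_ge0 => r _; apply: poisson_mass_ge0; apply: cell_mean_ge0. Qed.

Lemma cell_prob_le1 k : cell_prob k <= 1.
Proof.
apply: le_trans _ (sum_poisson_mass_le1 k.+1 (cell_mean_ge0 k)).
rewrite (cell_probE (ltnSn k)); apply: ler_sum => r _.
by case: ifP => // _; apply: poisson_mass_ge0; apply: cell_mean_ge0.
Qed.

Lemma cell_prob_gt0 k : (N ^ 3 <= k)%N -> 0 < cell_prob k.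
Proof.
move=> Nk; have [r rk label_r] := dlabel_exists N_gt0 j_le Nk.
have k_gt0 : (0 < k)%N by apply: leq_trans Nk; rewrite expn_gt0 N_gt0.
have mean_gt0 : 0 < cell_mean k by rewrite /cell_mean divr_gt0 ?exprn_gt0 ?ltr0n.
rewrite lt_def cell_prob_ge0 andbT psumr_neq0; last first.
  by move=> i _; apply: poisson_mass_ge0; apply: ltW.
apply/hasP; exists r; first by rewrite mem_index_iota.
by rewrite label_r poisson_mass_gt0.
Qed.

Lemma cell_prob_supermul k1 k2 : cell_prob k1 * cell_prob k2 <= cell_prob (k1 + k2).
Proof.
pose n := (k1 + k2).+1; pose p k r :=
  if dlabel N k r == Some j then poisson_mass (cell_mean k) r else 0.
have p_ge0 k r : 0 <= p k r.
  by rewrite /p; case: ifP => // _; apply: poisson_mass_ge0; apply: cell_mean_ge0.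
rewrite (cell_probE (k := k1) (n := n)) ?ltnS ?leq_addr //.
rewrite (cell_probE (k := k2) (n := n)) ?ltnS ?leq_addl //.
rewrite (cell_probE (k := k1 + k2) (n := n + n)) ?mulr_suml; last by rewrite /n; lia.
under eq_bigr do rewrite mulr_sumr.
apply: le_trans (sum_mul_le_conv (f := fun i i2 => p k1 i * p k2 i2) n _) _.
  by move=> i i'; apply: mulr_ge0.
apply: ler_sum_nat => r _; rewrite /p cell_meanD poisson_massD.
case: ifPn => [_|not_label]; last first.
  rewrite big_nat_cond big1 // => i /andP[/andP[_ ir] _].
  do 2!case: ifPn => ?; rewrite ?mul0r ?mulr0 //.
  by move: not_label; rewrite -(subnKC (ir : i <= r)%N) dlabelD.
apply: ler_sum_nat => i /andP[_ ir].
by do 2!case: ifP => _; rewrite ?mul0r ?mulr0 // mulr_ge0 ?poisson_mass_ge0 ?cell_mean_ge0.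
Qed.

Lemma limn_cell_sum k :
  limn (fun m => \sum_(0 <= r < m)
    (if dlabel N k r == Some j then poisson_mass (cell_mean k) r else 0)) = cell_prob k.
Proof.
apply: (@lim_near_cst R^o) => //; near=> m; rewrite (cell_probE (n := m)) //.
by near: m; apply: nbhs_infty_gt.
Unshelve. all: by end_near.
Qed.

End Cell.

Theorem lemma10 (R : realType) (eps M : R) :
  0 < eps < 2^-1 -> 40 <= M ->
  exists N0 : nat, forall N n : nat, (N0 <= N)%N -> (21 %| N)%N ->
    n%:R = M * N%:R ->
    forall F : config n, valid_config N F -> good eps N F ->
    exists theta : R, forall eta : R, 0 < eta ->
      exists K : nat, forall k : nat, (K <= k)%N ->
        expR (- (theta + eta) * k%:R) <= prob_config N k F <=
        expR (- (theta - eta) * k%:R).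
Proof.
move=> _ _; exists 1%N => N n N_gt0 _ _ F F_valid [notA _].
pose label i := odflt 0%N (F i).
have F_label i : F i = Some (label i).
  by rewrite /label; case E: (F i) => //; case: notA; exists i; rewrite E ltry.
have label_le i : (label i <= N ^ 3)%N by apply: (F_valid i); rewrite -F_label.
have prob_cells k : prob_config N k F = \prod_i cell_prob R N (label i) k.
  by apply: eq_bigr => i _; rewrite F_label limn_cell_sum.
apply: (@supermul_exp_asymptotics R (fun k => prob_config N k F) (N ^ 3)) => [k|k|k1 k2|k Nk|].
- by rewrite prob_cells prodr_ge0 // => i _; apply: cell_prob_ge0.
- by rewrite prob_cells prodr_ile1 // => i _; rewrite cell_prob_ge0 cell_prob_le1.
- rewrite !prob_cells -big_split /=; apply: ler_prod => i _.
  by rewrite mulr_ge0 ?cell_prob_ge0 ?cell_prob_supermul.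
- by rewrite prob_cells prodr_gt0 // => i _; apply: cell_prob_gt0.
- by rewrite expn_gt0 N_gt0.
Qed.
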